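(* Fix $\theta_j\in[0,1]$ and a non-increasing function $x_{-j}^{-1}$ arising from the other contests' prize structures. Let $x_j,\tilde x_j$ be strictly decreasing interim allocation functions, and set $$\phi_0:=\Phi_j^*(\theta_j;x_j,x_{-j}^{-1}),\qquad \phi_1:=\Phi_j^*(\theta_j;\tilde x_j,x_{-j}^{-1}).$$ Assume $\phi_0>0$. Then: - if $x_j(\phi_0)\ge\tilde x_j(\phi_0)$, then $\phi_0\ge\phi_1$; - if $x_j(\phi_0)\le\tilde x_j(\phi_0)$, then $\phi_0\le\phi_1$.
   Context: Interim allocation function. For a prize structure $\vec w$ with $w_1\ge\dots\ge w_n\ge0$ ($n\ge2$), $x_{\vec w}(\phi)=\sum_kw_k\binom{n-1}{k-1}\phi^{k-1}(1-\phi)^{n-k}$ on $[0,1]$. It is strictly decreasing iff $w_1>w_n$, and constant otherwise. Inverse notation. - For an interim allocation function $x$: $x^{-1}(y):=\max\{\phi\in[0,1]:x(\phi)\ge y\}$, with $x^{-1}(y):=0$ if $x(0)<y$. - Given prize structures of contests $j'\ne j$: $x_{-j}^{-1}:=\sum_{j'\ne j}x_{j'}^{-1}$. - For contest $j$ with strictly decreasing $x_j$: $Q(y):=x_j^{-1}(y)+x_{-j}^{-1}(y)$, $Q^{-1}(q):=\sup\{y:Q(y)\ge q\}$. Equilibrium participation. $\Phi_j^*(q;x_j,x_{-j}^{-1}):=x_j^{-1}(Q^{-1}(q))$. This is the equilibrium probability that a contestant has quantile at most $q$ and enters contest $j$, in the model where contestants with quantiles $q\sim U[0,1]$ choose among contests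 and compete by effort. *)

From HB Require Import structures.
From mathcomp Require Import all_boot all_order all_algebra.
From mathcomp Require Import all_classical all_reals.
From mathcomp Require Import ereal.
Set Implicit Arguments. Unset Strict Implicit. Unset Printing Implicit Defensive.
Import Order.TTheory GRing.Theory Num.Theory.
Local Open Scope ring_scope.
Local Open Scope classical_set_scope.

Section Defs.
Variable R : realType.

(* A prize structure w = (w_1, ..., w_n) with n >= 2, w_1 >= ... >= w_n >= 0,
   represented as a sequence (w`_0 = w_1, ..., w`_(n-1) = w_n). *)
Definition prize_structure (w : seq R) : Prop :=
  (2 <= size w)%N /\ sorted (fun a b => b <= a) w /\ all (fun a => 0 <= a) w.

(* Interim allocation function
   x_w(phi) = sum_{k=1}^n w_k C(n-1,k-1) phi^(k-1) (1-phi)^(n-k)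
   (index shifted by one: k here ranges over 0..n-1). *)
Definition interim (w : seq R) (phi : R) : R :=
  \sum_(k < size w)
     w`_k * ('C((size w).-1, k))%:R * phi ^+ k * (1 - phi) ^+ ((size w).-1 - k).

Definition strictly_decreasing01 (f : R -> R) : Prop :=
  forall a b, 0 <= a -> a < b -> b <= 1 -> f b < f a.

(* Stated for an extended-real argument y (so that it also applies to the
   value of Q^{-1}, which is +oo when the defining set is unbounded). *)
Definition xinv (x : R -> R) (y : \bar R) : R :=
  if ((x 0)%:E < y)%E then 0
  else sup [set phi : R | 0 <= phi <= 1 /\ (y <= (x phi)%:E)%E].

(* x_{-j}^{-1}(y) := sum_{j' <> j} x_{j'}^{-1}(y), for the list of prize
   structures of the other contests. *)
Definition xinv_others (ws : seq (seq R)) (y : R) : R :=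
  \sum_(w <- ws) xinv (interim w) y%:E.

Definition Qfun (x : R -> R) (xo : R -> R) (y : R) : R := xinv x y%:E + xo y.

Definition Qinv (x : R -> R) (xo : R -> R) (q : R) : \bar R :=
  ereal_sup [set y%:E | y in [set y : R | q <= Qfun x xo y]].

Definition Phi_star (q : R) (x : R -> R) (xo : R -> R) : R :=
  xinv x (Qinv x xo q).

End Defs.

From HB Require Import structures.
From mathcomp Require Import all_boot all_order all_algebra.
From mathcomp Require Import all_classical all_reals all_analysis.
From mathcomp Require Import lra.
Set Implicit Arguments. Unset Strict Implicit. Unset Printing Implicit Defensive.
Import Order.TTheory GRing.Theory Num.Theory.
Import numFieldNormedType.Exports.
Local Open Scope ring_scope.
Local Open Scope classical_set_scope.

(* For a strictly decreasing allocation f, Q(f p) = p + x_{-j}^{-1}(f p) =: G_f(p),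
   and Phi_j^*(theta; f) is a threshold for G_f: G_f < theta to its left and
   G_f >= theta to its right.  If Phi_j^*(theta; f) < p <= q < Phi_j^*(theta; g),
   then G_f(p) >= theta > G_g(q), which forces f p < g q
   because x_{-j}^{-1} is non-increasing.  So if, say, x~(phi0) <= x(phi0) but
   phi0 < phi1, taking m in (phi0, phi1) and, by continuity of x at phi0, p in
   (phi0, m) with x~(m) < x(p) gives the contradiction. *)

Lemma continuous_interim (R : realType) (w : seq R) : continuous (interim w).
Proof.
have -> : interim w = horner (\sum_(k < size w)
    (w`_k * ('C((size w).-1, k))%:R)%:P * 'X^k * (1 - 'X) ^+ ((size w).-1 - k)).
  by apply/funext => phi; rewrite /interim horner_sum; apply: eq_bigr => k _;
    rewrite !hornerE.
exact: continuous_horner.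
Qed.

Section NearWitness.
Variables (R : realType) (P : R -> Prop) (a : R).
Hypothesis aP : \forall t \near a, P t.

Lemma near_witness_right b : a < b -> exists2 p, a < p < b & P p.
Proof.
move=> ab; have : \forall t \near a^'+, a < t < b /\ P t.
  near=> t; split; last by near: t; exact: cvg_within aP.
  by apply/andP; split; near: t; [exact: nbhs_right_gt | exact: nbhs_right_lt].
by case/filter_ex => p []; exists p.
Unshelve. all: by end_near. Qed.

Lemma near_witness_left b : b < a -> exists2 p, b < p < a & P p.
Proof.
move=> ba; have : \forall t \near a^'-, b < t < a /\ P t.
  near=> t; split; last by near: t; exact: cvg_within aP.
  by apply/andP; split; near: t; [exact: nbhs_left_gt | exact: nbhs_left_lt].
by case/filter_ex => p []; exists p.
Unshelve. all: by end_near. Qed.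

End NearWitness.

Section GeneralizedInverse.
Variables (R : realType) (f : R -> R).

Local Notation upper_set y := [set phi : R | 0 <= phi <= 1 /\ (y <= (f phi)%:E)%E].

Lemma xinvE (y : \bar R) : (y <= (f 0)%:E)%E -> xinv f y = sup (upper_set y).
Proof. by move=> yf0; rewrite /xinv ltNge yf0. Qed.

Lemma upper_set_ub (y : \bar R) : ubound (upper_set y) 1.
Proof. by move=> t [/andP[]]. Qed.

Lemma upper_set_has_ubound (y : \bar R) : has_ubound (upper_set y).
Proof. by exists 1; exact: upper_set_ub. Qed.

Lemma upper_set0 (y : \bar R) : (y <= (f 0)%:E)%E -> upper_set y 0.
Proof. by move=> yf0; rewrite /= lexx ler01. Qed.

Lemma xinv_ge0 (y : \bar R) : 0 <= xinv f y.
Proof.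
rewrite /xinv; case: ltP => // /upper_set0 y0.
exact: (ub_le_sup (upper_set_has_ubound y) y0).
Qed.

Lemma xinv_le1 (y : \bar R) : xinv f y <= 1.
Proof.
rewrite /xinv; case: ltP => // /upper_set0 y0.
by apply: ge_sup; [exists 0 | exact: upper_set_ub].
Qed.

Lemma xinv_le (y1 y2 : \bar R) : (y1 <= y2)%E -> xinv f y2 <= xinv f y1.
Proof.
move=> y12; rewrite {1}/xinv; case: ltP => [_|y2f0]; first exact: xinv_ge0.
have y1f0 := le_trans y12 y2f0; rewrite xinvE //.
apply: ge_sup; first by exists 0; exact: upper_set0.
move=> t [t01 y2t]; apply: (ub_le_sup (upper_set_has_ubound y1)).
by split; [|exact: le_trans y2t].
Qed.

Hypothesis f_sd : strictly_decreasing01 f.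

Lemma sd01_le_of_le p q : 0 <= q -> p <= 1 -> f q <= f p -> p <= q.
Proof.
move=> q0 p1 fqp; rewrite leNgt; apply/negP => qp.
by have := f_sd q0 qp p1; rewrite ltNge fqp.
Qed.

Lemma sd01_le_at0 p : 0 <= p <= 1 -> f p <= f 0.
Proof.
case/andP => p0 p1; have [p_pos|p_le0] := ltP 0 p.
  exact/ltW/(f_sd (lexx 0) p_pos p1).
by have -> : p = 0 by apply/le_anti; rewrite p0 p_le0.
Qed.

Lemma le_xinv p (y : \bar R) : 0 <= p <= 1 -> (y <= (f p)%:E)%E -> p <= xinv f y.
Proof.
move=> p01 yfp; have yf0 : (y <= (f 0)%:E)%E.
  by apply: le_trans yfp _; rewrite lee_fin sd01_le_at0.
by rewrite xinvE //; exact: (ub_le_sup (upper_set_has_ubound y)).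
Qed.

Lemma xinv_fK p : 0 <= p <= 1 -> xinv f (f p)%:E = p.
Proof.
move=> p01; apply/le_anti; rewrite le_xinv // andbT.
rewrite xinvE ?lee_fin ?sd01_le_at0 //; apply: ge_sup; first by exists p.
move=> t [/andP[_ t1]]; rewrite lee_fin; apply: sd01_le_of_le => //.
by case/andP: p01.
Qed.

Lemma lt_xinv q (y : \bar R) : 0 <= q -> q < xinv f y -> (y < (f q)%:E)%E.
Proof.
move=> q0; rewrite /xinv; have [_|yf0] := ltP (f 0)%:E y; first by rewrite ltNge q0.
case/sup_gt; first by exists 0; exact: upper_set0.
move=> t [/andP[_ t1] yft] qt; apply: le_lt_trans yft _.
by rewrite lte_fin; exact: f_sd.
Qed.

Lemma xinv_lt p (y : \bar R) : p <= 1 -> xinv f y < p -> ((f p)%:E < y)%E.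
Proof.
move=> p1 yp; have p0 : 0 <= p by exact: (le_trans (xinv_ge0 y) (ltW yp)).
by rewrite ltNge; apply/negP => /(@le_xinv p); rewrite p0 p1 leNgt yp => /(_ isT).
Qed.

End GeneralizedInverse.

Lemma xinv_others_le (R : realType) (ws : seq (seq R)) :
  {homo xinv_others ws : y1 y2 /~ y1 <= y2}.
Proof. by move=> y1 y2 y12; apply: ler_sum => w _; apply: xinv_le; rewrite lee_fin. Qed.

Section Threshold.
Variables (R : realType) (f xo : R -> R) (theta : R).
Hypotheses (f_sd : strictly_decreasing01 f) (xo_le : {homo xo : y1 y2 /~ y1 <= y2}).

Lemma Qfun_le y1 y2 : y1 <= y2 -> Qfun f xo y2 <= Qfun f xo y1.
Proof. by move=> y12; apply: lerD; [apply: xinv_le; rewrite lee_fin|exact: xo_le]. Qed.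

Lemma Qfun_fE p : 0 <= p <= 1 -> Qfun f xo (f p) = p + xo (f p).
Proof. by move=> p01; rewrite /Qfun xinv_fK. Qed.

Lemma le_Qinv y : theta <= Qfun f xo y -> (y%:E <= Qinv f xo theta)%E.
Proof. by move=> hy; apply: ereal_sup_ubound; exists y. Qed.

Lemma lt_Qinv y : (y%:E < Qinv f xo theta)%E -> theta <= Qfun f xo y.
Proof.
by case/ereal_sup_gt => _ [s hs <-]; rewrite lte_fin => /ltW/Qfun_le; exact: le_trans.
Qed.

Lemma lt_Phi_star q : 0 <= q -> q < Phi_star theta f xo -> q + xo (f q) < theta.
Proof.
move=> q0 qPhi; have q1 : q <= 1 by exact: (ltW (lt_le_trans qPhi (xinv_le1 _ _))).
rewrite -Qfun_fE ?q0 // ltNge; apply/negP => /le_Qinv.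
by rewrite leNgt lt_xinv.
Qed.

Lemma Phi_star_lt p : p <= 1 -> Phi_star theta f xo < p -> theta <= p + xo (f p).
Proof.
move=> p1 Phip; have p0 : 0 <= p by exact: (le_trans (xinv_ge0 _ _) (ltW Phip)).
by rewrite -Qfun_fE ?p0 //; apply/lt_Qinv/xinv_lt.
Qed.

End Threshold.

Lemma Phi_star_gap_lt (R : realType) (f g xo : R -> R) (theta p q : R) :
    strictly_decreasing01 f -> strictly_decreasing01 g ->
    {homo xo : y1 y2 /~ y1 <= y2} ->
  Phi_star theta f xo < p -> p <= q -> q < Phi_star theta g xo -> f p < g q.
Proof.
move=> f_sd g_sd xo_le Phi_p pq q_Phi; rewrite ltNge; apply/negP => gqfp.
have p0 : 0 <= p by exact: le_trans (xinv_ge0 _ _) (ltW Phi_p).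
have q1 : q <= 1 by exact: le_trans (ltW q_Phi) (xinv_le1 _ _).
have := lt_Phi_star g_sd (le_trans p0 pq) q_Phi.
apply/negP; rewrite -leNgt.
apply: le_trans (Phi_star_lt f_sd xo_le (le_trans pq q1) Phi_p) _.
by apply: lerD => //; exact: xo_le.
Qed.

Section Comparison.
Variables (R : realType) (f g xo : R -> R) (theta : R).
Hypotheses (f_sd : strictly_decreasing01 f) (g_sd : strictly_decreasing01 g).
Hypothesis xo_le : {homo xo : y1 y2 /~ y1 <= y2}.

Let phi := Phi_star theta f xo.
Let psi := Phi_star theta g xo.

Lemma Phi_star_le_of_le :
  {for phi, continuous f} -> g phi <= f phi -> psi <= phi.
Proof.
move=> f_cont gf; rewrite leNgt; apply/negP => phi_psi.
pose m := (phi + psi) / 2.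
have [phi_m m_psi] : phi < m /\ m < psi by split; rewrite /m; lra.
have m1 : m <= 1 by exact: le_trans (ltW m_psi) (xinv_le1 _ _).
have gmf : g m < f phi by apply: lt_le_trans gf; exact: g_sd (xinv_ge0 _ _) phi_m m1.
have [p /andP[phi_p p_m] gmp] := near_witness_right (cvgr_gt _ f_cont _ gmf) phi_m.
have := Phi_star_gap_lt f_sd g_sd xo_le phi_p (ltW p_m) m_psi.
by rewrite ltNge (ltW gmp).
Qed.

Lemma Phi_star_ge_of_ge :
  {for phi, continuous f} -> f phi <= g phi -> phi <= psi.
Proof.
move=> f_cont fg; rewrite leNgt; apply/negP => psi_phi.
pose q := (psi + phi) / 2.
have [psi_q q_phi] : psi < q /\ q < phi by split; rewrite /q; lra.
have q0 : 0 <= q by exact: le_trans (xinv_ge0 _ _) (ltW psi_q).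
have fgq : f phi < g q by apply: le_lt_trans fg _; exact: g_sd q0 q_phi (xinv_le1 _ _).
have [p /andP[q_p p_phi] fpg] := near_witness_left (cvgr_lt _ f_cont _ fgq) q_phi.
have := Phi_star_gap_lt g_sd f_sd xo_le psi_q (ltW q_p) p_phi.
by rewrite ltNge (ltW fpg).
Qed.

End Comparison.

Theorem mainTheorem11 (R : realType) (theta : R) (ws_other : seq (seq R))
    (w wt : seq R) :
  0 <= theta <= 1 ->
  (forall w', w' \in ws_other -> prize_structure w') ->
  prize_structure w -> prize_structure wt ->
  strictly_decreasing01 (interim w) ->
  strictly_decreasing01 (interim wt) ->
  let phi0 := Phi_star theta (interim w) (xinv_others ws_other) in
  let phi1 := Phi_star theta (interim wt) (xinv_others ws_other) in
  0 < phi0 ->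
  (interim wt phi0 <= interim w phi0 -> phi1 <= phi0) /\
  (interim w phi0 <= interim wt phi0 -> phi0 <= phi1).
Proof.
move=> _ _ _ _ w_sd wt_sd phi0 phi1 _.
have xo_le := xinv_others_le ws_other.
split.
- exact: Phi_star_le_of_le w_sd wt_sd xo_le (@continuous_interim _ w _).
- exact: Phi_star_ge_of_ge w_sd wt_sd xo_le (@continuous_interim _ w _).
Qed.
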